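(* Let $\mathbb{F}$ be a field and let $(\mathbb{F}(\alpha,\beta),\sigma)$ be a bivariate difference field extension of $\mathbb{F}$ with $\sigma|_{\mathbb{F}}=\mathrm{id}$, $\sigma(\alpha)=\beta$, $\sigma(\beta)=u\alpha+v\beta$ ($u\in\mathbb{F}\setminus\{0\}$, $v\in\mathbb{F}$). Let $A=\begin{pmatrix}0&u\\1&v\end{pmatrix}$ and assume that $A$ has two distinct eigenvalues $\lambda_1\neq\lambda_2$ in $\mathbb{F}$ such that $\lambda_1/\lambda_2$ is not a root of unity. Let $a,b\in\mathbb{F}[\alpha,\beta]$ be two relatively prime homogeneous polynomials. Then $\mathrm{Spr}_\sigma(a,b)$ is a finite set.
   Context: A bivariate difference field extension $(\mathbb{F}(\alpha,\beta),\sigma)$ of a difference field $(\mathbb{F},\sigma)$ is the rational function field $\mathbb{F}(\alpha,\beta)$ in two algebraically independent transcendental elements $\alpha,\beta$ over $\mathbb{F}$, together with an automorphism $\sigma$ of $\mathbb{F}(\alpha,\beta)$ extending $\sigma$ on $\mathbb{F}$ and satisfying $\sigma(\alpha)=\beta$, $\sigma(\beta)=u\alpha+v\beta$. $\deg$ denotes total degree in $\alpha,\beta$. For nonzero $p,q\in\mathbb{F}[\alpha,\beta]$, the spread is $\mathrm{Spr}_\sigma(p,q)=\{m\in\mathbb{N} : \deg(\gcd(p,\sigma^m q))>0\}$. *)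

From HB Require Import structures.
From mathcomp Require Import all_boot all_order all_algebra.
From mathcomp Require Import mpoly.
Set Implicit Arguments. Unset Strict Implicit. Unset Printing Implicit Defensive.
Import Order.TTheory GRing.Theory Num.Theory.
Local Open Scope ring_scope.

Notation bipoly F := {mpoly F[2]}.

Definition alpha {F : fieldType} : bipoly F := 'X_(@ord0 1).
Definition beta {F : fieldType} : bipoly F := 'X_(@ord_max 1).

(* sigma on F[alpha,beta]: identity on F, alpha |-> beta, beta |-> u alpha + v beta.
   (Its restriction to F[alpha,beta] of the automorphism of F(alpha,beta).) *)
Definition sigma {F : fieldType} (u v : F) (p : bipoly F) : bipoly F :=
  comp_mpoly [tuple beta; u *: alpha + v *: beta] p.

Definition bdeg {F : fieldType} (p : bipoly F) : nat := (msize p).-1.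

Definition bdvd {F : fieldType} (d p : bipoly F) : Prop := exists q, p = q * d.

(* deg(gcd(p,q)) > 0  <->  p and q have a common divisor of positive degree *)
Definition gcd_nonconst {F : fieldType} (p q : bipoly F) : Prop :=
  exists d : bipoly F, (0 < bdeg d)%N /\ bdvd d p /\ bdvd d q.

Definition rel_prime {F : fieldType} (p q : bipoly F) : Prop := ~ gcd_nonconst p q.

Definition Spr {F : fieldType} (u v : F) (p q : bipoly F) : nat -> Prop :=
  fun m => gcd_nonconst p (iter m (sigma u v) q).

Definition finite_natset (S : nat -> Prop) : Prop :=
  exists N : nat, forall m, S m -> (m <= N)%N.

Definition matA {F : fieldType} (u v : F) : 'M[F]_2 :=
  \matrix_(i < 2, j < 2)
    (if i == 0 then (if j == 0 then 0 else u) else (if j == 0 then 1 else v)).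

From HB Require Import structures.
From mathcomp Require Import all_boot all_order all_algebra.
From mathcomp Require Import mpoly.
From mathcomp Require Import ring zify.
From Stdlib Require Import Classical.
Set Implicit Arguments. Unset Strict Implicit. Unset Printing Implicit Defensive.
Import GRing.Theory.
Local Open Scope ring_scope.

(* In the coordinates x = beta - lambda2 alpha, y = beta - lambda1 alpha, which
   are eigenvectors of sigma, sigma^m is the diagonal substitution
   (x, y) |-> (lambda1^m x, lambda2^m y), and this change of coordinates
   preserves homogeneity and coprimality.  A common factor of positive degree of
   a and sigma^m b may be replaced by its top homogeneous component, and setting
   one of x, y to 1 turns it into a common factor of A(X) and B(nu^m X), where
   A, B are the dehomogenised a, b and nu = lambda_i / lambda_j; A(0) and B(0)
   do not both vanish, since a and b are coprime.  For an irreducible g with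
   g(0) <> 0 the dilates g(nu^-m X) are pairwise coprime because nu is not a
   root of unity, so at most deg B of them divide B; summing over the
   irreducible factors of A bounds the number of such m by deg A * deg B. *)

Lemma finite_natset_uniq (S : nat -> Prop) (K : nat) :
  (forall s, uniq s -> (forall m, m \in s -> S m) -> (size s <= K)%N) ->
  finite_natset S.
Proof.
move=> bounded; apply: NNPP => unbounded.
have above N : exists2 m, S m & (N < m)%N.
  apply: NNPP => none; apply: unbounded; exists N => m Sm.
  by rewrite leqNgt; apply/negP => ltNm; apply: none; exists m.
suff [s us [sS size_s]] :
    exists2 s, uniq s & (forall m, m \in s -> S m) /\ size s = K.+1.
  by have := bounded s us sS; rewrite size_s ltnn.
elim: K.+1 => [|k [s us [sS <-]]]; first by exists [::].
have [m Sm ltm] := above (\max_(x <- s) x).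
have ms : m \notin s.
  by apply: contraTN ltm => ms; rewrite -leqNgt (leq_bigmax_seq (F := id) _ ms).
exists (m :: s); first by rewrite /= ms.
by split=> // x; rewrite inE => /predU1P [->|/sS].
Qed.

Section Dilation.
Variable F : fieldType.
Implicit Types (c : F) (p q g : {poly F}).

Definition dilate c p := p \Po (c *: 'X).

Lemma coef_dilate c p k : (dilate c p)`_k = c ^+ k * p`_k.
Proof.
have -> : dilate c p = \poly_(i < size p) (c ^+ i * p`_i).
  rewrite /dilate comp_polyE poly_def; apply: eq_bigr => i _.
  by rewrite exprZn scalerA mulrC.
by rewrite coef_poly; case: ltnP => // /(nth_default 0) ->; rewrite mulr0.
Qed.

Lemma coef0_dilate c p : (dilate c p)`_0 = p`_0.
Proof. by rewrite coef_dilate mul1r. Qed.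

Lemma dilate_comp c1 c2 p : dilate c1 (dilate c2 p) = dilate (c2 * c1) p.
Proof. by rewrite /dilate -comp_polyA comp_polyZ comp_polyX scalerA. Qed.

Lemma dilateK c : c != 0 -> cancel (dilate c) (dilate c^-1).
Proof. by move=> c_nz p; rewrite dilate_comp mulfV // /dilate scale1r comp_polyXr. Qed.

Lemma size_dilate c p : c != 0 -> size (dilate c p) = size p.
Proof. by move=> c_nz; rewrite size_comp_poly2 // size_scale ?size_polyX. Qed.

Lemma dvdp_dilate c p q : p %| q -> dilate c p %| dilate c q.
Proof. exact: dvdp_comp_poly. Qed.

Lemma coprimep_dilate_irredp c g : c != 0 -> (forall k, (0 < k)%N -> c ^+ k != 1) ->
  irreducible_poly g -> g`_0 != 0 -> coprimep g (dilate c g).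
Proof.
move=> c_nz c_nroot irr_g g0; rewrite irreducible_poly_coprime //; apply/negP => g_dvd.
have g_nz := irredp_neq0 irr_g.
have /eqpP [[k1 k2] /= /andP [k1_nz _] g_eq] : g %= dilate c g.
  by rewrite -dvdp_size_eqp // size_dilate.
have k12 : k1 = k2.
  by have := congr1 (coefp 0) g_eq; rewrite /= !coefZ coef0_dilate => /mulIf; apply.
pose n := (size g).-1.
have n_gt0 : (0 < n)%N by rewrite /n -subn1 subn_gt0; exact: irr_g.1.
have gn_nz : g`_n != 0 by rewrite -lead_coefE lead_coef_eq0.
have /negP [] := c_nroot n n_gt0.
have := congr1 (coefp n) g_eq; rewrite /= !coefZ coef_dilate -k12 => /(mulfI k1_nz).
by rewrite -{1}[g`_n]mul1r => /(mulIf gn_nz) <-.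
Qed.

Lemma coprimep_dilate_exp c g m1 m2 :
  c != 0 -> (forall k, (0 < k)%N -> c ^+ k != 1) ->
  irreducible_poly g -> g`_0 != 0 -> m1 != m2 ->
  coprimep (dilate (c ^+ m1) g) (dilate (c ^+ m2) g).
Proof.
move=> c_nz c_nroot irr_g g0 ne12.
wlog lt12 : m1 m2 {ne12} / (m1 < m2)%N => [hwlog|].
  have [/hwlog //|/hwlog|eq12] := ltngtP m1 m2; first by rewrite coprimep_sym.
  by rewrite eq12 eqxx in ne12.
rewrite -(subnKC (ltnW lt12)) exprD mulrC -dilate_comp; apply: coprimep_comp_poly.
apply: coprimep_dilate_irredp => //; first by rewrite expf_neq0.
by move=> k k_gt0; rewrite -exprM c_nroot // muln_gt0 subn_gt0 lt12.
Qed.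

End Dilation.

Section IrreducibleFactors.
Variable F : fieldType.
Implicit Types (p q g : {poly F}).

Lemma irredp_dvdp_exists p : (1 < size p)%N -> exists2 g, irreducible_poly g & g %| p.
Proof.
move: {2}(size p) (leqnn (size p)) => n; elim: n p => [|n IH] p size_p p_gt1.
  by move: (leq_trans p_gt1 size_p).
have [irr_p|red_p] := classic (irreducible_poly p); first by exists p.
have [q q_red] : exists q, ~ (size q != 1%N -> q %| p -> q %= p).
  by apply: not_all_ex_not => irr; apply: red_p; split.
have [q_n1 {}q_red] := imply_to_and _ _ q_red.
have [qp /negP q_np] := imply_to_and _ _ q_red.
have p_nz : p != 0 by rewrite -size_poly_gt0 ltnW.
have q_nz : q != 0 by apply: contraNneq p_nz => q0; rewrite -dvd0p -q0.
have lt_qp : (size q < size p)%N by rewrite ltn_neqAle dvdp_size_eqp // q_np dvdp_leq.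
have q_gt1 : (1 < size q)%N by rewrite ltn_neqAle eq_sym q_n1 size_poly_gt0.
have [g irr_g gq] := IH q (leq_trans lt_qp size_p) q_gt1.
by exists g => //; apply: dvdp_trans gq qp.
Qed.

Lemma common_factor_not_coprimep g p q :
  (1 < size g)%N -> g %| p -> g %| q -> ~~ coprimep p q.
Proof.
move=> g_gt1 gp gq; apply/coprimepP => /(_ g gp gq).
by rewrite -size_poly_eq1 gtn_eqF.
Qed.

Lemma coef0_dvdp g p : g %| p -> g`_0 = 0 -> p`_0 = 0.
Proof. by case/dvdpP => r ->; rewrite coef0M => ->; rewrite mulr0. Qed.

Lemma irredp_common_factor p q : p != 0 -> (p`_0 != 0) || (q`_0 != 0) ->
  ~~ coprimep p q -> exists g, [/\ irreducible_poly g, g`_0 != 0, g %| p & g %| q].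
Proof.
move=> p_nz coef0_nz; rewrite coprimep_def => gcd_n1.
have [|g irr_g] := @irredp_dvdp_exists (gcdp p q).
  by rewrite ltn_neqAle eq_sym gcd_n1 size_poly_gt0 gcdp_eq0 negb_and p_nz.
rewrite dvdp_gcd => /andP [gp gq]; exists g; split=> //.
apply: contraTneq coef0_nz => g0.
by rewrite negb_or !negbK (coef0_dvdp gp g0) (coef0_dvdp gq g0) eqxx.
Qed.

Lemma dvdp_divp_irredp g g' p : irreducible_poly g -> irreducible_poly g' ->
  g %| p -> g' %| p -> ~~ (g' %= g) -> g' %| p %/ g.
Proof.
move=> irr_g irr_g' gp g'p g'_ng.
have g'_cop : coprimep g' g.
  rewrite irreducible_poly_coprime //; apply: contra g'_ng => g'g.
  by apply: irr_g g'g; rewrite gtn_eqF ?irr_g'.1.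
by rewrite -(Gauss_dvdpl _ g'_cop) divpK.
Qed.

Lemma dvdp_prod_coprime (I : eqType) (s : seq I) (G : I -> {poly F}) p : uniq s ->
  (forall i j, i \in s -> j \in s -> i != j -> coprimep (G i) (G j)) ->
  (forall i, i \in s -> G i %| p) -> \prod_(i <- s) G i %| p.
Proof.
elim: s => [|i s IH] /=; first by rewrite big_nil dvd1p.
case/andP => i_notin us G_cop Gp; rewrite big_cons Gauss_dvdp ?Gp ?mem_head ?IH //.
- by move=> j k js ks; apply: G_cop; rewrite inE ?js ?ks orbT.
- by move=> j js; apply: Gp; rewrite inE js orbT.
rewrite big_seq; apply: (big_ind (coprimep (G i))) => [|q r|j js].
- exact: coprimep1.
- by rewrite coprimepMr => -> ->.
by apply: G_cop; rewrite ?mem_head ?inE ?js ?orbT //; apply: contraNneq i_notin => ->.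
Qed.

End IrreducibleFactors.

Section DilationOrbit.
Variables (F : fieldType) (nu : F).
Hypotheses (nu_nz : nu != 0) (nu_nroot : forall k, (0 < k)%N -> nu ^+ k != 1).

Lemma count_dvdp_dilate (g B : {poly F}) s :
  irreducible_poly g -> g`_0 != 0 -> B != 0 -> uniq s ->
  (forall m, m \in s -> g %| dilate (nu ^+ m) B) -> (size s <= (size B).-1)%N.
Proof.
move=> irr_g g0 B_nz us gB.
pose G m := dilate (nu^-1 ^+ m) g.
have nuV_nz : nu^-1 != 0 by rewrite invr_eq0.
have size_G m : size (G m) = size g by rewrite size_dilate ?expf_neq0.
have prodG : \prod_(m <- s) G m %| B.
  apply: dvdp_prod_coprime => // [m1 m2 _ _ m12|m /gB g_dvd]; rewrite /G.
    apply: coprimep_dilate_exp => // k k_gt0.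
    by rewrite exprVn invr_eq1 nu_nroot.
  by have := dvdp_dilate (nu^-1 ^+ m) g_dvd; rewrite exprVn dilateK ?expf_neq0.
have := dvdp_leq B_nz prodG; rewrite size_prod_seq => [|m _]; last first.
  by rewrite -size_poly_gt0 size_G size_poly_gt0 irredp_neq0.
under eq_bigr do rewrite size_G.
rewrite big_const_seq count_predT iter_addn_0.
have g_gt1 : (1 < size g)%N := irr_g.1.
by move: g_gt1; move: (size g) (size s) (size B) => t k b; nia.
Qed.

(* Split off one irreducible factor g of A: the m for which g divides the
   dilate of B are counted by count_dvdp_dilate, the others by induction on
   A %/ g. *)
Lemma count_not_coprimep_dilate (A B : {poly F}) s :
  A != 0 -> B != 0 -> (A`_0 != 0) || (B`_0 != 0) -> uniq s ->
  (forall m, m \in s -> ~~ coprimep A (dilate (nu ^+ m) B)) ->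
  (size s <= (size A).-1 * (size B).-1)%N.
Proof.
move: {2}(size A) (leqnn (size A)) => n; elim: n A s => [|n IH] A s size_A A_nz.
  by move: size_A; rewrite leqn0 size_poly_eq0 (negPf A_nz).
move=> B_nz coef0_nz; case: s => [//|m0 s] us ncop.
have common_factor m : m \in m0 :: s -> exists g,
    [/\ irreducible_poly g, g`_0 != 0, g %| A & g %| dilate (nu ^+ m) B].
  by move=> /ncop; apply: irredp_common_factor; rewrite ?coef0_dilate.
have [g [irr_g g0 gA _]] := common_factor m0 (mem_head _ _).
pose P m := g %| dilate (nu ^+ m) B.
have count_P : (count P (m0 :: s) <= (size B).-1)%N.
  rewrite -size_filter; apply: (count_dvdp_dilate irr_g g0 B_nz); first exact: filter_uniq.
  by move=> m; rewrite mem_filter => /andP [].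
have g_nz := irredp_neq0 irr_g.
have A_eq : A = A %/ g * g by rewrite divpK.
have Ag_nz : A %/ g != 0 by apply: contraNneq A_nz => Ag0; rewrite A_eq Ag0 mul0r.
have size_Ag : size (A %/ g) = (size A - (size g).-1)%N by rewrite size_divp.
have g_gt1 : (1 < size g)%N := irr_g.1.
have g_le_A : (size g <= size A)%N by rewrite dvdp_leq.
have count_nP : (count (predC P) (m0 :: s) <= (size (A %/ g)%R).-1 * (size B).-1)%N.
  rewrite -size_filter; apply: IH => //; first by rewrite size_Ag; lia.
  - move: coef0_nz; rewrite {1}A_eq coef0M mulf_eq0 negb_or.
    by case/orP => [/andP [-> _]|->]; rewrite ?orbT.
  - exact: filter_uniq.
  move=> m; rewrite mem_filter => /andP [nPm /common_factor [g' [irr_g' _ g'A g'B]]].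
  apply: (common_factor_not_coprimep irr_g'.1 _ g'B).
  apply: dvdp_divp_irredp => //; apply: contra nPm => g'g.
  by rewrite /P -(eqp_dvdl _ g'g).
rewrite -(count_predC P); move: count_P count_nP; rewrite size_Ag.
move: g_gt1 g_le_A size_A; move: (count _ _) (count _ _) (size g) (size A) (size B).
by move=> x y t a b; nia.
Qed.

Lemma not_coprimep_dilate_finite (A B : {poly F}) :
  A != 0 -> B != 0 -> (A`_0 != 0) || (B`_0 != 0) ->
  finite_natset (fun m => ~~ coprimep A (dilate (nu ^+ m) B)).
Proof.
move=> A_nz B_nz coef0_nz; apply: (@finite_natset_uniq _ ((size A).-1 * (size B).-1)).
by move=> s; apply: count_not_coprimep_dilate.
Qed.

End DilationOrbit.

Section LinearSubstitution.
Variables (R : comRingType) (n : nat).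
Implicit Types (p : {mpoly R[n]}) (lq lr : n.-tuple {mpoly R[n]}).

Lemma comp_mpolyA k l p (lq : n.-tuple {mpoly R[k]}) (lr : k.-tuple {mpoly R[l]}) :
  (p \mPo lq) \mPo lr = p \mPo [tuple tnth lq i \mPo lr | i < n].
Proof.
rewrite [p \mPo lq]comp_mpolyEX [RHS]comp_mpolyEX raddf_sum /=.
apply: eq_bigr => m _; rewrite comp_mpolyZ !comp_mpolyX rmorph_prod /=.
by congr (_ *: _); apply: eq_bigr => i _; rewrite rmorphXn /= tnth_map tnth_ord_tuple.
Qed.

Lemma eq_comp_mpoly k p (lq lr : n.-tuple {mpoly R[k]}) :
  (forall i, tnth lq i = tnth lr i) -> p \mPo lq = p \mPo lr.
Proof. by move=> eq_lq; rewrite (eq_from_tnth eq_lq). Qed.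

Lemma comp_mpolyK lq lr :
  (forall i, tnth lq i \mPo lr = 'X_i) -> cancel (comp_mpoly lq) (comp_mpoly lr).
Proof.
move=> lqK p; rewrite comp_mpolyA -[RHS]comp_mpoly_id; apply: eq_comp_mpoly => i.
by rewrite !tnth_map !tnth_ord_tuple lqK.
Qed.

Lemma comp_mpoly_dhomog d p lq :
  p \is d.-homog -> (forall i, tnth lq i \is 1.-homog) -> p \mPo lq \is d.-homog.
Proof.
move=> /dhomogP p_hom lq_hom; rewrite comp_mpolyEX big_seq rpred_sum // => m pm.
apply: dhomogZ; rewrite comp_mpolyX -(p_hom m pm) /= mdegE.
apply: (big_ind2 (fun q e => q \is e.-homog)) => [|q1 d1 q2 d2|i _].
- exact: dhomog1.
- exact: dhomogM.
- by have := dhomogMn (m i) (lq_hom i); rewrite mul1n.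
Qed.

Definition mdiag (c : 'I_n -> R) : n.-tuple {mpoly R[n]} := [tuple c i *: 'X_i | i < n].

Lemma mdiag_dhomog c i : tnth (mdiag c) i \is 1.-homog.
Proof. by rewrite tnth_map tnth_ord_tuple dhomogZ // dhomogX /= mdeg1. Qed.

Lemma eq_mdiag c1 c2 : c1 =1 c2 -> mdiag c1 = mdiag c2.
Proof. by move=> eq_c; apply: eq_from_tnth => i; rewrite !tnth_map !tnth_ord_tuple eq_c. Qed.

Lemma mdiag1 : mdiag (fun=> 1) = [tuple 'X_i | i < n].
Proof. by apply: eq_from_tnth => i; rewrite !tnth_map !tnth_ord_tuple scale1r. Qed.

Lemma comp_mdiag c1 c2 p :
  p \mPo mdiag c1 \mPo mdiag c2 = p \mPo mdiag (fun i => c1 i * c2 i).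
Proof.
rewrite comp_mpolyA; apply: eq_comp_mpoly => i.
rewrite !tnth_map !tnth_ord_tuple comp_mpolyZ comp_mpolyXU -tnth_nth.
by rewrite tnth_map tnth_ord_tuple scalerA.
Qed.

End LinearSubstitution.

Lemma mdiagK (F : fieldType) n (c : 'I_n -> F) : (forall i, c i != 0) ->
  cancel (comp_mpoly (mdiag c)) (comp_mpoly (mdiag (fun i => (c i)^-1))).
Proof.
move=> c_nz p; rewrite comp_mdiag (@eq_mdiag _ _ _ (fun=> 1)) ?mdiag1 ?comp_mpoly_id //.
by move=> i; rewrite mulfV.
Qed.

Section TopComponent.
Variables (R : idomainType) (n : nat).
Implicit Types (p q : {mpoly R[n]}).

Definition mtop p := pihomog mdeg (msize p).-1 p.

Lemma mtopP p : mtop p \is (msize p).-1.-homog.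
Proof. exact: pihomogP. Qed.

Lemma pihomogM_top p q e f : (msize p <= e.+1)%N -> (msize q <= f.+1)%N ->
  pihomog mdeg (e + f) (p * q) = pihomog mdeg e p * pihomog mdeg f q.
Proof.
move=> size_p size_q.
have below i j : (i <= e)%N -> (j <= f)%N -> (i < e)%N || (j < f)%N ->
    pihomog mdeg (e + f) (pihomog mdeg i p * pihomog mdeg j q) = 0.
  move=> le_ie le_jf ij_lt; apply: (pihomog_ne0 (d := (i + j)%N)).
    by move: ij_lt; lia.
  by apply: dhomogM; apply: pihomogP.
rewrite {1}(pihomog_partitionE size_p) {1}(pihomog_partitionE size_q).
rewrite big_distrl raddf_sum big_ord_recr /= big1 => [|i _]; last first.
  rewrite big_distrr raddf_sum big1 // => j _.
  by apply: below; [exact: ltnW | exact: ltn_ord j | rewrite ltn_ord].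
rewrite add0r big_distrr raddf_sum big_ord_recr /= big1 => [|j _]; last first.
  by apply: below; [|exact: ltnW|rewrite ltn_ord orbT].
by rewrite add0r pihomog_dE //; apply: dhomogM; apply: pihomogP.
Qed.

Lemma mtopM p q : p != 0 -> q != 0 -> mtop (p * q) = mtop p * mtop q.
Proof.
move=> p_nz q_nz.
have msizeS (r : {mpoly R[n]}) : r != 0 -> msize r = (msize r).-1.+1.
  by move=> r_nz; rewrite prednK // lt0n msize_poly_eq0.
rewrite /mtop msizeM // (msizeS p) // (msizeS q) // addnS /=.
by rewrite pihomogM_top -?msizeS.
Qed.

Lemma mtop_id d p : p \is d.-homog -> mtop p = p.
Proof. by move=> /dhomog_msize; apply: pihomog_dE. Qed.

Lemma mtop_factor d a e q : a \is d.-homog -> a != 0 -> a = q * e ->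
  a = mtop q * mtop e.
Proof.
move=> a_hom a_nz a_eq; have := a_nz; rewrite a_eq mulf_eq0 negb_or => /andP [q_nz e_nz].
by rewrite -mtopM // -a_eq (mtop_id a_hom).
Qed.

End TopComponent.

Lemma ord2_cases (k : 'I_2) : k = ord0 \/ k = ord_max.
Proof. by case: k => [[|[|]]] // ?; [left|right]; apply: val_inj. Qed.

Lemma big_ord2_ne (T : Type) (idx : T) (op : Monoid.com_law idx) (G : 'I_2 -> T) i j :
  j != i -> \big[op/idx]_(k < 2) G k = op (G i) (G j).
Proof.
move=> ji; rewrite (bigD1 i) // (bigD1 j) //= big1 ?Monoid.mulm1 // => k /andP [ki kj].
by move: ki kj ji; have [->|->] := ord2_cases i; have [->|->] := ord2_cases j;
  have [->|->] := ord2_cases k.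
Qed.

Lemma eq_mnm2 (m m' : 'X_{1..2}) i : mdeg m = mdeg m' -> m i = m' i -> m = m'.
Proof.
move=> eq_deg eq_i; apply/mnmP => k; have [-> //|ki] := eqVneq k i.
by move: eq_deg; rewrite !mdegE !(big_ord2_ne _ _ ki) eq_i => /addnI.
Qed.

Section Dehomogenization.
Variable F : fieldType.
Implicit Types (p q : bipoly F) (i j : 'I_2).

Definition dehomog i p : {poly F} :=
  mmap (@polyC F) (fun k => if k == i then 'X else 1) p.

Lemma dehomogE i p : dehomog i p = \sum_(m <- msupp p) p@_m *: 'X^(m i).
Proof.
apply: eq_bigr => m _; rewrite mul_polyC /mmap1 (bigD1 i) //= eqxx big1 ?mulr1 //.
by move=> k /negPf ->; rewrite expr1n.
Qed.

Lemma coef_dehomog i d p m : p \is d.-homog -> m \in msupp p ->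
  (dehomog i p)`_(m i) = p@_m.
Proof.
move=> /dhomogP p_hom pm; rewrite dehomogE coef_sum (big_rem m) //= coefZ coefXn eqxx mulr1.
rewrite big_seq big1 ?addr0 // => m'; rewrite (mem_rem_uniq _ (msupp_uniq p)) inE.
case/andP => m'm pm'; rewrite coefZ coefXn; case: eqP => [eq_i|_]; last by rewrite mulr0.
by case/eqP: m'm; apply/esym/(eq_mnm2 _ eq_i); rewrite !p_hom.
Qed.

Lemma dehomog_neq0 i d p : p \is d.-homog -> p != 0 -> dehomog i p != 0.
Proof.
move=> p_hom /mlead_supp pm; apply/eqP => dh0.
by move: (pm); rewrite mcoeff_msupp -(coef_dehomog i p_hom pm) dh0 coef0 eqxx.
Qed.

Lemma size_dehomog_gt1 d p : p \is d.-homog -> p != 0 -> (0 < d)%N ->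
  exists i, (1 < size (dehomog i p))%N.
Proof.
move=> p_hom /mlead_supp pm d_gt0; set m := mlead p in pm.
have [i mi_gt0] : exists i, (0 < m i)%N.
  have ne10 : ord_max != ord0 :> 'I_2 by [].
  move: d_gt0; rewrite -(dhomog_mf p_hom pm) /= mdegE (big_ord2_ne _ _ ne10).
  by case: (posnP (m ord0)) => [->|]; [exists ord_max | exists ord0].
exists i; apply: leq_ltn_trans mi_gt0 _; rewrite ltnNge.
apply/negP => /leq_sizeP /(_ _ (leqnn _)); apply/eqP.
by rewrite (coef_dehomog i p_hom pm) -mcoeff_msupp.
Qed.

Lemma dvdX_dehomog_coef0 i d p : p \is d.-homog -> (dehomog i p)`_0 = 0 -> bdvd 'X_i p.
Proof.
move=> p_hom dh0; exists (\sum_(m <- msupp p) p@_m *: 'X_[m - U_(i)]).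
rewrite {1}[p]mpolyE big_distrl /=; apply: eq_big_seq => m pm.
have mi_gt0 : (0 < m i)%N.
  rewrite lt0n; apply: contraTneq (pm) => mi0.
  by rewrite mcoeff_msupp -(coef_dehomog i p_hom pm) mi0 dh0 eqxx.
rewrite -scalerAl -mpolyXD; congr (_ *: 'X_[_]); apply/mnmP => k.
by rewrite mnmDE mnmBE mnm1E; case: eqP => [<-|_]; rewrite ?subnK ?subn0 ?addn0.
Qed.

Lemma dvdp_dehomog i p q : bdvd p q -> dehomog i p %| dehomog i q.
Proof. by case=> r ->; rewrite /dehomog rmorphM dvdp_mull. Qed.

Lemma dehomog_comp i p (lq : 2.-tuple (bipoly F)) :
  dehomog i (p \mPo lq) =
  \sum_(m <- msupp p) p@_m *: \prod_(k < 2) dehomog i (tnth lq k) ^+ m k.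
Proof.
rewrite comp_mpolyEX /dehomog raddf_sum; apply: eq_bigr => m _.
rewrite /= mmapZ comp_mpolyX rmorph_prod mul_polyC; congr (_ *: _).
by apply: eq_bigr => k _; rewrite rmorphXn.
Qed.

Lemma dehomog_mdiag i j (c : 'I_2 -> F) d p : j != i -> c j != 0 -> p \is d.-homog ->
  dehomog i (p \mPo mdiag c) = c j ^+ d *: dilate (c i / c j) (dehomog i p).
Proof.
move=> ji cj_nz /dhomogP p_hom.
have dehomogZX k : dehomog i (c k *: 'X_k) = c k *: (if k == i then 'X else 1).
  by rewrite /dehomog mmapZ mmapX mmap1U mul_polyC.
rewrite dehomog_comp dehomogE /dilate raddf_sum /= scaler_sumr; apply: eq_big_seq => m pm.
rewrite (big_ord2_ne _ _ ji) !tnth_map !tnth_ord_tuple !dehomogZX eqxx (negPf ji).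
rewrite comp_polyZ comp_Xn_poly -(p_hom m pm) /= mdegE (big_ord2_ne _ _ ji).
rewrite !exprZn expr1n -scalerAr mulr1 !scalerA; congr (_ *: _).
by rewrite expr_div_n exprD; field; rewrite expf_neq0.
Qed.

Lemma gcd_nonconst_dehomog da db a b :
  a \is da.-homog -> b \is db.-homog -> a != 0 -> b != 0 ->
  gcd_nonconst a b -> exists i, ~~ coprimep (dehomog i a) (dehomog i b).
Proof.
move=> a_hom b_hom a_nz b_nz [d [d_pos [[q a_eq] [r b_eq]]]].
have a_top := mtop_factor a_hom a_nz a_eq; have b_top := mtop_factor b_hom b_nz b_eq.
have top_nz : mtop d != 0 by apply: contraNneq a_nz => top0; rewrite a_top top0 mulr0.
have [i top_gt1] := size_dehomog_gt1 (mtopP d) top_nz d_pos.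
exists i; apply: (common_factor_not_coprimep top_gt1); apply: dvdp_dehomog.
  by exists (mtop q).
by exists (mtop r).
Qed.

Lemma dehomog_dilate_finite i nu da db a b : nu != 0 ->
  (forall k, (0 < k)%N -> nu ^+ k != 1) ->
  a \is da.-homog -> b \is db.-homog -> a != 0 -> b != 0 -> rel_prime a b ->
  finite_natset (fun m => ~~ coprimep (dehomog i a) (dilate (nu ^+ m) (dehomog i b))).
Proof.
move=> nu_nz nu_nroot a_hom b_hom a_nz b_nz ab_coprime.
apply: not_coprimep_dilate_finite; rewrite ?(dehomog_neq0 _ a_hom) ?(dehomog_neq0 _ b_hom) //.
rewrite -negb_and; apply/negP => /andP [/eqP a0 /eqP b0]; apply: ab_coprime.
exists 'X_i; split; first by rewrite /bdeg msizeX mdeg1.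
by split; apply: dvdX_dehomog_coef0; eassumption.
Qed.

End Dehomogenization.

Lemma gcd_nonconst_comp (F : fieldType) (lq lr : 2.-tuple (bipoly F)) (p q : bipoly F) :
  cancel (comp_mpoly lq) (comp_mpoly lr) ->
  gcd_nonconst p q -> gcd_nonconst (p \mPo lq) (q \mPo lq).
Proof.
move=> lqK [d [d_pos [[p' ->] [q' ->]]]]; exists (d \mPo lq).
split; last by split; [exists (p' \mPo lq) | exists (q' \mPo lq)]; rewrite rmorphM.
move: d_pos; rewrite /bdeg -!subn1 !subn_gt0 !ltnNge; apply: contra => /msize1_polyC d_const.
by rewrite -(lqK d) d_const comp_mpolyC msizeC leq_b1.
Qed.

Lemma spread_mdiag_finite (F : fieldType) (lam : 'I_2 -> F) da db (a b : bipoly F) :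
  (forall k, lam k != 0) -> (forall n, (0 < n)%N -> (lam ord0 / lam ord_max) ^+ n != 1) ->
  a \is da.-homog -> b \is db.-homog -> a != 0 -> b != 0 -> rel_prime a b ->
  finite_natset (fun m => gcd_nonconst a (b \mPo mdiag (fun k => lam k ^+ m))).
Proof.
move=> lam_nz lam_nroot a_hom b_hom a_nz b_nz ab_coprime.
have ratio_nz i j : lam i / lam j != 0 by rewrite mulf_neq0 ?invr_eq0.
have [N0 fin0] := dehomog_dilate_finite ord0 (ratio_nz _ _) lam_nroot a_hom b_hom a_nz b_nz ab_coprime.
have lam_nroot' k : (0 < k)%N -> (lam ord_max / lam ord0) ^+ k != 1.
  by move=> k_gt0; rewrite -invf_div exprVn invr_eq1 lam_nroot.
have [N1 fin1] := dehomog_dilate_finite ord_max (ratio_nz _ _) lam_nroot' a_hom b_hom a_nz b_nz ab_coprime.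
exists (maxn N0 N1) => m; set bm := b \mPo _.
have lamm_nz k : lam k ^+ m != 0 by rewrite expf_neq0.
have bm_hom : bm \is db.-homog by apply: comp_mpoly_dhomog => // k; apply: mdiag_dhomog.
have bm_nz : bm != 0.
  by apply: contraNneq b_nz => bm0; rewrite -(mdiagK lamm_nz b) -/bm bm0 comp_mpoly0.
have dehomog_bm i j : j != i ->
    dehomog i bm = lam j ^+ m ^+ db *: dilate ((lam i / lam j) ^+ m) (dehomog i b).
  by move=> ji; rewrite expr_div_n (dehomog_mdiag (c := fun k => lam k ^+ m) ji _ b_hom).
move=> /(gcd_nonconst_dehomog a_hom bm_hom a_nz bm_nz) [i].
have [->|->] := ord2_cases i.
  rewrite (dehomog_bm _ ord_max) // coprimepZr ?expf_neq0 //.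
  by move=> /fin0 /leq_trans; apply; apply: leq_maxl.
rewrite (dehomog_bm _ ord0) // coprimepZr ?expf_neq0 //.
by move=> /fin1 /leq_trans; apply; apply: leq_maxr.
Qed.

Lemma eigenvalue_matA (F : fieldType) (u v l : F) :
  eigenvalue (matA u v) l -> l ^+ 2 = u + v * l.
Proof.
case/eigenvalueP => w w_eig w_nz.
have w_eig_at k := congr1 (fun M : 'M_(1, 2) => M 0 k) w_eig.
have lift00 : lift ord0 ord0 = ord_max :> 'I_2 by apply: val_inj.
have := w_eig_at ord0; have := w_eig_at ord_max.
rewrite !mxE !big_ord_recl !big_ord0 !mxE /= lift00 !addr0 mulr0 mulr1 add0r.
set w0 := w 0 ord0; set w1 := w 0 ord_max => eig1 eig0.
have w0_nz : w0 != 0.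
  apply: contraNneq w_nz => w00; apply/eqP/rowP => k; rewrite !mxE.
  by have [->|->] := ord2_cases k; [exact: w00 | rewrite -/w1 eig0 w00 mulr0].
by apply: (mulIf w0_nz); rewrite expr2 -mulrA -eig0 -eig1 eig0; ring.
Qed.

Lemma matA_vieta (F : fieldType) (u v l1 l2 : F) : l1 != l2 ->
  eigenvalue (matA u v) l1 -> eigenvalue (matA u v) l2 -> u = - (l1 * l2) /\ v = l1 + l2.
Proof.
move=> l12 /eigenvalue_matA e1 /eigenvalue_matA e2.
have v_eq : v = l1 + l2.
  have : (l1 - l2) * (l1 + l2 - v) = (l1 ^+ 2 - v * l1) - (l2 ^+ 2 - v * l2) by ring.
  rewrite e1 e2 !addrK subrr => /eqP; rewrite mulf_eq0 !subr_eq0 (negPf l12) /=.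
  by move=> /eqP.
by split => //; rewrite -[u](addrK (v * l1)) -e1 v_eq; ring.
Qed.

Section EigenCoordinates.
Variables (F : fieldType) (l1 l2 : F).
Hypothesis l12 : l1 != l2.

Definition eigenforms : 2.-tuple (bipoly F) := [tuple beta - l2 *: alpha; beta - l1 *: alpha].

Definition eigencoords : 2.-tuple (bipoly F) :=
  [tuple (l1 - l2)^-1 *: (alpha - beta); (l1 - l2)^-1 *: (l1 *: alpha - l2 *: beta)].

Definition eigvals : 'I_2 -> F := tnth [tuple l1; l2].

Let l12_nz : l1 - l2 != 0. Proof. by rewrite subr_eq0. Qed.

Lemma eigenformsK : cancel (comp_mpoly eigenforms) (comp_mpoly eigencoords).
Proof.
apply: comp_mpolyK => k; rewrite -[RHS]scale1r -[X in _ = X *: _](mulVf l12_nz).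
have [->|->] := ord2_cases k; rewrite /= !raddfB /= !comp_mpolyZ /alpha /beta !comp_mpolyXU /=;
  by rewrite -!mul_mpolyC !(rmorphM, rmorphB) /= /alpha /beta; ring.
Qed.

Lemma eigencoordsK : cancel (comp_mpoly eigencoords) (comp_mpoly eigenforms).
Proof.
apply: comp_mpolyK => k; rewrite -[RHS]scale1r -[X in _ = X *: _](mulVf l12_nz).
have [->|->] := ord2_cases k;
  rewrite /= !comp_mpolyZ !raddfB /= ?comp_mpolyZ /alpha /beta !comp_mpolyXU /=;
  by rewrite -!mul_mpolyC !(rmorphM, rmorphB) /= /alpha /beta; ring.
Qed.

Lemma eigencoords_dhomog k : tnth eigencoords k \is 1.-homog.
Proof.
have X_hom (i : 'I_2) : ('X_i : bipoly F) \is 1.-homog by rewrite dhomogX /= mdeg1.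
by have [->|->] := ord2_cases k; apply/dhomogZ/rpredB; try apply: dhomogZ; apply: X_hom.
Qed.

Lemma sigma_eigenforms u v p : u = - (l1 * l2) -> v = l1 + l2 ->
  sigma u v (p \mPo eigenforms) = (p \mPo mdiag eigvals) \mPo eigenforms.
Proof.
move=> -> ->; rewrite /sigma !comp_mpolyA; apply: eq_comp_mpoly => k.
rewrite !tnth_map !tnth_ord_tuple comp_mpolyZ comp_mpolyXU.
have [->|->] := ord2_cases k;
  rewrite /= !raddfB /= !comp_mpolyZ /alpha /beta !comp_mpolyXU /eigvals /=;
  by rewrite -!mul_mpolyC !(rmorphM, rmorphB, rmorphN, rmorphD) /=; ring.
Qed.

Lemma iter_sigma_eigenforms u v p m : u = - (l1 * l2) -> v = l1 + l2 ->
  iter m (sigma u v) (p \mPo eigenforms) =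
  (p \mPo mdiag (fun k => eigvals k ^+ m)) \mPo eigenforms.
Proof.
move=> u_eq v_eq; elim: m => [|m IH] /=.
  rewrite (@eq_mdiag _ _ _ (fun=> 1)) => [|k]; last by rewrite expr0.
  by rewrite mdiag1 comp_mpoly_id.
rewrite IH (sigma_eigenforms _ u_eq v_eq); apply: (congr1 (comp_mpoly eigenforms)).
rewrite comp_mdiag (@eq_mdiag _ _ _ (fun k => eigvals k ^+ m.+1)) // => k.
by rewrite exprSr.
Qed.

End EigenCoordinates.

Unset Implicit Arguments.
Set Strict Implicit.

Theorem theorem2p3 (F : fieldType) (u v : F) (lambda1 lambda2 : F)
    (a b : {mpoly F[2]}) :
  u != 0 ->
  lambda1 != lambda2 ->
  eigenvalue (matA u v) lambda1 ->
  eigenvalue (matA u v) lambda2 ->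
  (forall n : nat, (0 < n)%N -> ~~ n.-unity_root (lambda1 / lambda2)) ->
  a != 0 -> b != 0 ->
  (exists d : nat, a \is d.-homog) ->
  (exists d : nat, b \is d.-homog) ->
  rel_prime a b ->
  finite_natset (Spr u v a b).
Proof.
move=> u_nz l12 eig1 eig2 nroot a_nz b_nz [da a_hom] [db b_hom] ab_coprime.
have [u_eq v_eq] := matA_vieta l12 eig1 eig2.
have eigvals_nz k : eigvals lambda1 lambda2 k != 0.
  have : lambda1 * lambda2 != 0 by apply: contraNneq u_nz => l0; rewrite u_eq l0 oppr0.
  by rewrite mulf_eq0 negb_or => /andP [l1_nz l2_nz]; have [->|->] := ord2_cases k.
have LK := eigenformsK l12; have MK := eigencoordsK l12.
pose M := eigencoords lambda1 lambda2.
have M_hom d c : c \is d.-homog -> c \mPo M \is d.-homog.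
  by move=> c_hom; apply: comp_mpoly_dhomog c_hom (eigencoords_dhomog _ _).
have M_nz c : c != 0 -> c \mPo M != 0.
  by move=> c_nz; apply: contraNneq c_nz => c0; rewrite -(MK c) c0 comp_mpoly0.
have ratio_nroot n : (0 < n)%N ->
    (eigvals lambda1 lambda2 ord0 / eigvals lambda1 lambda2 ord_max) ^+ n != 1.
  by move=> n_gt0; rewrite -unity_rootE nroot.
have M_coprime : rel_prime (a \mPo M) (b \mPo M).
  by move=> /(gcd_nonconst_comp LK); rewrite !MK.
have [N finN] := spread_mdiag_finite eigvals_nz ratio_nroot (M_hom _ _ a_hom) (M_hom _ _ b_hom)
  (M_nz _ a_nz) (M_nz _ b_nz) M_coprime.
exists N => m; rewrite /Spr -(MK a) -(MK b) (iter_sigma_eigenforms _ _ u_eq v_eq).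
by move=> /(gcd_nonconst_comp MK); rewrite !LK => /finN.
Qed.
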